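(* Let $\mathcal{G}$ be a grounded graph class. Then every level-$\mathcal{G}$ weighted graph has a sorted $\mathcal{G}$-safe edge elimination scheme if and only if $\mathcal{G}$ is sandwich monotone.
   Context: All graphs are finite, simple and undirected. A ($k$-)weighted graph is a pair $(G,\omega)$ with $\omega:E(G)\to\{1,\dots,k\}$ surjective for some positive integer $k$. For $1\le i\le k+1$, the $i$-th level graph of $(G,\omega)$ is obtained from $G$ by removing all edges $e$ with $\omega(e)<i$; $(G,\omega)$ is level-$\mathcal{G}$ if all its level graphs belong to $\mathcal{G}$. For $G\in\mathcal{G}$, a set $F\subseteq E(G)$ (resp. edge $e$) is $\mathcal{G}$-safe if $G-F\in\mathcal{G}$ (resp. $G-e\in\mathcal{G}$). $\mathcal{G}$ is grounded if for every $G\in\mathcal{G}$, $E(G)$ is $\mathcal{G}$-safe. $\mathcal{G}$ is sandwich monotone if for each $G\in\mathcal{G}$ and each non-empty $\mathcal{G}$-safe set $F\subseteq E(G)$ there is a $\mathcal{G}$-safe edge in $F$. For an edge ordering $\tau=(e_1,\dots,e_m)$ of $G$ let $G^i_\tau=G-\{e_1,\dots,e_i\}$; for $G\in\mathcal{G}$, a $\mathcal{G}$-safe edge elimination scheme is an edge ordering with $G^i_\tau\in\mathcal{G}$ for all $i\in\{1,\dots,m\}$, and it is sorted (for a weighted graph $(G,\omega)$) if $i<j$ implies $\omega(e_i)\le\omega(e_j)$. *)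

From mathcomp Require Import all_boot.
Set Implicit Arguments. Unset Strict Implicit. Unset Printing Implicit Defensive.

(* A finite simple undirected graph with vertex set the finite type T is
   given by its edge set E : {set {set T}}, every edge being a 2-subset of T. *)
Definition simple_graph (T : finType) (E : {set {set T}}) : Prop :=
  forall e, e \in E -> #|e| = 2.

Definition graph_class := forall T : finType, {set {set T}} -> Prop.

Definition safe_set (C : graph_class) (T : finType) (E F : {set {set T}}) : Prop :=
  C T (E :\: F).

Definition grounded (C : graph_class) : Prop :=
  forall (T : finType) (E : {set {set T}}),
    simple_graph E -> C T E -> safe_set C E E.

Definition sandwich_monotone (C : graph_class) : Prop :=
  forall (T : finType) (E : {set {set T}}),
    simple_graph E -> C T E ->
    forall F : {set {set T}}, F \subset E -> F != set0 -> safe_set C E F ->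
      exists2 e, e \in F & safe_set C E [set e].

Definition weighted_graph (T : finType) (E : {set {set T}}) (w : {set T} -> nat)
    (k : nat) : Prop :=
  [/\ simple_graph E, 0 < k,
      forall e, e \in E -> 1 <= w e <= k
    & forall i, 1 <= i <= k -> exists2 e, e \in E & w e = i].

Definition level_graph (T : finType) (E : {set {set T}}) (w : {set T} -> nat)
    (i : nat) : {set {set T}} :=
  [set e in E | i <= w e].

Definition level_class (C : graph_class) (T : finType) (E : {set {set T}})
    (w : {set T} -> nat) (k : nat) : Prop :=
  forall i, 1 <= i <= k.+1 -> C T (level_graph E w i).

Definition edge_ordering (T : finType) (E : {set {set T}}) (s : seq {set T}) : Prop :=
  perm_eq s (enum E).

Definition remove_prefix (T : finType) (E : {set {set T}}) (s : seq {set T})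
    (i : nat) : {set {set T}} :=
  E :\: [set e in take i s].

Definition safe_elimination_scheme (C : graph_class) (T : finType)
    (E : {set {set T}}) (s : seq {set T}) : Prop :=
  edge_ordering E s /\
  forall i, 1 <= i <= size s -> C T (remove_prefix E s i).

Definition sorted_ordering (T : finType) (w : {set T} -> nat) (s : seq {set T}) : Prop :=
  forall i j, i < j < size s -> w (nth set0 s i) <= w (nth set0 s j).

From mathcomp Require Import all_boot zify.

Set Implicit Arguments.
Unset Strict Implicit.
Unset Printing Implicit Defensive.

(* Sufficiency, by induction on the number of edges: the set F of edges of
   minimum weight m is safe, because G - F is the (m+1)-th level graph, so
   sandwich monotonicity yields a safe edge e in F. Every level graph of G - e
   is G - e itself or a level graph of G, hence G - e is again level-G and e
   can be prepended to its sorted scheme.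
   Necessity: for a non-empty safe set F, weight the edges of F by 1 and the
   others by 2. The level graphs are then G, G - F and the edgeless graph
   (which lies in the class since it is grounded), so there is a sorted safe
   scheme; its first edge has weight 1, i.e. lies in F, and is safe. *)

Section EliminationSchemes.

Variable T : finType.
Implicit Types (C : graph_class) (E : {set {set T}}) (e x : {set T})
  (s : seq {set T}) (w : {set T} -> nat).

Lemma remove_prefix_cons E e s i :
  remove_prefix E (e :: s) i.+1 = remove_prefix (E :\ e) s i.
Proof.
by apply/setP=> x; rewrite /remove_prefix take_cons !inE negb_or andbCA andbA.
Qed.

Lemma remove_prefix0 E s : remove_prefix E s 0 = E.
Proof. by apply/setP=> x; rewrite /remove_prefix !inE take0. Qed.

Lemma safe_elimination_scheme_nil C :
  safe_elimination_scheme C set0 (Nil {set T}).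
Proof. by split=> [|[]]; rewrite ?/edge_ordering ?enum_set0. Qed.

Lemma safe_elimination_scheme_cons C E e s :
  e \in E -> C T (E :\ e) -> safe_elimination_scheme C (E :\ e) s ->
  safe_elimination_scheme C E (e :: s).
Proof.
move=> eE CEe [ps CEs]; split.
  apply: uniq_perm; rewrite ?enum_uniq //=.
    by rewrite (perm_uniq ps) enum_uniq (perm_mem ps) mem_enum !inE eqxx.
  by move=> x; rewrite in_cons (perm_mem ps) !mem_enum !inE; case: eqP => // ->.
case=> [|[|i]] // hi; rewrite remove_prefix_cons ?remove_prefix0 //.
exact: CEs.
Qed.

Lemma safe_elimination_scheme_head C E e s :
  safe_elimination_scheme C E (e :: s) -> C T (E :\ e).
Proof. by case=> _ /(_ 1 isT); rewrite remove_prefix_cons remove_prefix0. Qed.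

Lemma sorted_ordering_cons w e s :
  {in s, forall x, w e <= w x} -> sorted_ordering w s ->
  sorted_ordering w (e :: s).
Proof.
move=> le_e sorted_s [|i] [|j] //=; last exact: sorted_s.
by move=> lt_j; apply: le_e; rewrite mem_nth.
Qed.

Lemma sorted_ordering_head w e s x :
  sorted_ordering w (e :: s) -> x \in e :: s -> w e <= w x.
Proof.
move=> sorted_es xs; rewrite -(nth_index set0 xs).
case: (index x (e :: s)) (index_mem x (e :: s)) => [|j] //.
by rewrite xs => lt_j; apply: (sorted_es 0 j.+1).
Qed.

Lemma level_graph0 E w : level_graph E w 0 = E.
Proof. by apply/setP=> x; rewrite inE andbT. Qed.

Lemma level_graph_clamp E w k i :
  {in E, forall e, 1 <= w e <= k} ->
  level_graph E w i = level_graph E w (maxn 1 (minn i k.+1)).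
Proof.
move=> w_range; apply/setP=> x; rewrite !inE.
by case xE: (x \in E) => //=; move: (w_range x xE); lia.
Qed.

Lemma level_class_all C E w k :
  weighted_graph E w k -> level_class C E w k ->
  forall i, C T (level_graph E w i).
Proof.
case=> _ _ w_range _ Clevels i; rewrite (level_graph_clamp i w_range).
by apply: Clevels; lia.
Qed.

Lemma setD_min_weight E w m :
  {in E, forall e, m <= w e} ->
  E :\: [set e in E | w e == m] = level_graph E w m.+1.
Proof.
move=> w_ge; apply/setP=> x; rewrite !inE.
by case xE: (x \in E) => //=; move: (w_ge x xE); lia.
Qed.

Lemma level_graph_setD1_min E w e i :
  {in E, forall x, w e <= w x} ->
  level_graph (E :\ e) w i = if i <= w e then E :\ e else level_graph E w i.
Proof.
move=> w_ge; apply/setP=> x.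
case: ifP => le_i; rewrite !inE; case: eqP => [->|_] //=.
  by case xE: (x \in E) => //=; move: (w_ge x xE); lia.
by rewrite le_i andbF.
Qed.

Lemma sandwich_monotone_sorted_scheme C E w :
  sandwich_monotone C -> simple_graph E ->
  (forall i, C T (level_graph E w i)) ->
  exists s, safe_elimination_scheme C E s /\ sorted_ordering w s.
Proof.
move=> smC; have [n] := ubnP #|E|.
elim: n E => // n IH E /ltnSE size_E sE Clevels.
have [->|[e0 e0E]] := set_0Vmem E.
  exists [::]; split; first exact: safe_elimination_scheme_nil.
  by move=> i j; rewrite ltn0 andbF.
have [e1 e1E w_ge] : exists2 e1, e1 \in E & {in E, forall x, w e1 <= w x}.
  by case: (arg_minnP w e0E) => x xE min_x; exists x.
have CE : C T E by rewrite -(level_graph0 E w); apply: Clevels.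
have [e eF Ce] : exists2 e, e \in [set x in E | w x == w e1] & C T (E :\ e).
  apply: smC => //.
  - by apply/subsetP=> x; rewrite inE => /andP[].
  - by apply/set0Pn; exists e1; rewrite inE e1E eqxx.
  - by rewrite /safe_set setD_min_weight.
move: eF; rewrite inE => /andP[eE /eqP w_e].
have {}w_ge : {in E, forall x, w e <= w x} by rewrite w_e.
have [s [scheme_s sorted_s]] :
    exists s, safe_elimination_scheme C (E :\ e) s /\ sorted_ordering w s.
  apply: IH; first by rewrite (cardsD1 e E) eE in size_E.
  - by move=> x /setD1P[_ /sE].
  - by move=> i; rewrite level_graph_setD1_min //; case: ifP.
exists (e :: s); split; first exact: safe_elimination_scheme_cons.
apply: sorted_ordering_cons => // x.
by rewrite (perm_mem scheme_s.1) mem_enum => /setD1P[_ /w_ge].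
Qed.

Lemma sorted_scheme_head_safe C E w s x :
  safe_elimination_scheme C E s -> sorted_ordering w s -> x \in E ->
  exists2 e, w e <= w x & C T (E :\ e).
Proof.
move=> scheme_s sorted_s xE.
have xs : x \in s by rewrite (perm_mem scheme_s.1) mem_enum.
case: s xs scheme_s sorted_s => // e s xs scheme_s sorted_s.
exists e; first exact: sorted_ordering_head sorted_s xs.
exact: safe_elimination_scheme_head scheme_s.
Qed.

End EliminationSchemes.

Section TwoLevelWeight.

Variable T : finType.
Variables E F : {set {set T}}.
Hypotheses (FE : F \subset E) (F0 : F != set0).

Definition two_level_weight (e : {set T}) : nat := if e \in F then 1 else 2.

Lemma two_level_weighted_graph :
  simple_graph E ->
  weighted_graph E two_level_weight (if E \subset F then 1 else 2).
Proof.
move=> sE; have [f fF] := set0Pn _ F0; have fE := subsetP FE f fF.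
split=> //; first by case: ifP.
  move=> e eE; rewrite /two_level_weight; case: ifP => eF; case: ifP => // EF.
  by rewrite (subsetP EF e eE) in eF.
move=> i; case: ifP => [_|/subsetPn[g gE gF]].
  by case: i => [|[|]] //= _; exists f; rewrite /two_level_weight ?fF.
case: i => [|[|[|]]] //= _; first by exists f; rewrite /two_level_weight ?fF.
by exists g; rewrite /two_level_weight ?(negbTE gF).
Qed.

Lemma level_graph_two_level i :
  level_graph E two_level_weight i =
    if i <= 1 then E else if i == 2 then E :\: F else set0.
Proof.
apply/setP=> x; rewrite /two_level_weight.
case: i => [|[|[|i]]] /=; rewrite !inE;
  by case: (x \in F); rewrite ?andbT ?andbF.
Qed.

Lemma two_level_class C :
  grounded C -> simple_graph E -> C T E -> safe_set C E F ->
  forall i, C T (level_graph E two_level_weight i).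
Proof.
move=> grC sE CE CEF i; rewrite level_graph_two_level.
case: ifP => // _; case: ifP => // _.
by rewrite -(setDv E); apply: grC.
Qed.

End TwoLevelWeight.

Theorem proposition3p1 (C : graph_class) :
  grounded C ->
  ((forall (T : finType) (E : {set {set T}}) (w : {set T} -> nat) (k : nat),
      weighted_graph E w k -> level_class C E w k ->
      exists s : seq {set T},
        safe_elimination_scheme C E s /\ sorted_ordering w s)
   <-> sandwich_monotone C).
Proof.
move=> grC; split=> [schemes | smC].
  move=> T E sE CE F FE F0 CEF; have [f fF] := set0Pn _ F0.
  have [s [scheme_s sorted_s]] :=
    schemes T E _ _ (two_level_weighted_graph FE F0 sE)
      (fun i _ => two_level_class grC sE CE CEF i).
  have [e le_ef Ce] :=
    sorted_scheme_head_safe scheme_s sorted_s (subsetP FE f fF).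
  by exists e => //; move: le_ef; rewrite /two_level_weight fF; case: ifP.
move=> T E w k wg Clevels; apply: sandwich_monotone_sorted_scheme => //.
  by case: wg.
exact: level_class_all wg Clevels.
Qed.
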